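(* Let $\mathcal{Y}=\{y_1,\dots,y_{n+1}\}\subset\mathbb{R}^n$ be affinely independent and $y_0\in\mathbb{R}^n$. Then the matrix $G=\sum_{i=0}^{n+1}\ell_iy_iy_i^T$ has exactly $|\mathcal{I}_+|-1$ positive eigenvalues and exactly $|\mathcal{I}_-|-1$ negative eigenvalues (counted with multiplicity).
   Context: The barycentric coordinates of $y_0\in\mathbb{R}^n$ with respect to the affinely independent set $\mathcal{Y}$ are the unique reals $\ell_1,\dots,\ell_{n+1}$ with $\sum_{i=1}^{n+1}\ell_i=1$ and $\sum_{i=1}^{n+1}\ell_iy_i=y_0$; set $\ell_0=-1$. Define $\mathcal{I}_+=\{i\in\{0,1,\dots,n+1\}:\ell_i>0\}$ and $\mathcal{I}_-=\{i\in\{0,1,\dots,n+1\}:\ell_i<0\}$ (so $0\in\mathcal{I}_-$). *)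

From HB Require Import structures.
From mathcomp Require Import all_boot all_order all_algebra.
Set Implicit Arguments. Unset Strict Implicit. Unset Printing Implicit Defensive.
Import Order.TTheory GRing.Theory Num.Theory.
Local Open Scope ring_scope.

Definition affinely_independent (R : fieldType) (n m : nat)
  (y : 'I_m -> 'cV[R]_n) : Prop :=
  forall c : 'I_m -> R,
    \sum_(i < m) c i = 0 -> \sum_(i < m) c i *: y i = 0 -> forall i, c i = 0.

Definition barycentric (R : fieldType) (n m : nat)
  (y : 'I_m -> 'cV[R]_n) (y0 : 'cV[R]_n) (l : 'I_m -> R) : Prop :=
  \sum_(i < m) l i = 1 /\ \sum_(i < m) l i *: y i = y0.

Definition ext0 (T : Type) (m : nat) (x0 : T) (x : 'I_m -> T) (i : 'I_m.+1) : T :=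
  match unlift ord0 i with Some j => x j | None => x0 end.

(* G = sum_{i=0}^{n+1} l_i y_i y_i^T  with l_0 = -1. *)
Definition Gmat (R : comNzRingType) (n : nat) (y0 : 'cV[R]_n)
  (y : 'I_n.+1 -> 'cV[R]_n) (l : 'I_n.+1 -> R) : 'M[R]_n :=
  \sum_(i < n.+2) ext0 (-1) l i *: (ext0 y0 y i *m (ext0 y0 y i)^T).

(* s is the multiset of eigenvalues of A, counted with (algebraic)
   multiplicity: the characteristic polynomial of A splits as prod_(x in s) (X - x). *)
Definition eigen_multiset (R : comNzRingType) (n : nat) (A : 'M[R]_n) (s : seq R) : Prop :=
  char_poly A = \prod_(x <- s) ('X - x%:P).

From HB Require Import structures.
From mathcomp Require Import all_boot all_order all_algebra.
From mathcomp Require Import ring zify complex.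
Import Order.TTheory GRing.Theory Num.Theory.
Set Implicit Arguments. Unset Strict Implicit. Unset Printing Implicit Defensive.
Local Open Scope ring_scope.

(* Let Y be the n x (n+1) matrix with columns y_i.  Since sum l_i y_i = y_0, one has
   G = Y M Y^T with M = diag(l) - l l^T, and 1 M = 0.  As [1; Y] is invertible, every
   z in R^(n+1) is t 1 + x Y, and then x G x^T = z M z^T.  This form is positive on the
   vectors supported on I_+ with sum l_i z_i = 0 (dimension |I_+| - 1) and negative on
   the vectors supported on {i >= 1 | l_i < 0} (dimension |I_-| - 1), while z |-> x maps
   the vectors supported on {l_i = 0} into the kernel of G.  These three dimensions add
   up to n; against the spectral decomposition of G each bounds the corresponding
   eigenvalue count, which forces equality. *)

Lemma sum_mulrn_eq (V : nmodType) m (F : 'I_m -> V) j : \sum_i F i *+ (i == j) = F j.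
Proof. by rewrite (bigD1 j) //= eqxx big1 ?addr0 // => i /negbTE->. Qed.

Lemma card_set_count (T : finType) (P : pred T) : #|[set x | P x]| = count P (enum T).
Proof. by rewrite [in RHS]enumT cardsE cardE /enum_mem size_filter. Qed.

Lemma card_sign_partition (R : numDomainType) m (g : 'I_m -> R) :
  (forall j, g j \is Num.real) ->
  (#|[set j | (0 < g j)%R]| + #|[set j | (g j < 0)%R]| + #|[set j | (g j == 0)%R]|
    = m)%N.
Proof.
move=> g_real; rewrite -!sum1dep_card (big_mkcond (fun i => 0 < g i)).
rewrite (big_mkcond (fun i => g i < 0)) (big_mkcond (fun i => g i == 0)) -!big_split.
rewrite -[RHS]card_ord -sum1_card; apply: eq_bigr => j _ /=.
by case: real_ltgt0P (g_real j).
Qed.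

Lemma ext0_0 T m (x0 : T) (x : 'I_m -> T) : ext0 x0 x ord0 = x0.
Proof. by rewrite /ext0 unlift_none. Qed.

Lemma ext0_lift T m (x0 : T) (x : 'I_m -> T) j : ext0 x0 x (lift ord0 j) = x j.
Proof. by rewrite /ext0 liftK. Qed.

Lemma card_ext0_pos (R : numDomainType) m (l : 'I_m -> R) :
  #|[set i : 'I_m.+1 | 0 < ext0 (-1) l i]| = #|[set j | 0 < l j]|.
Proof.
rewrite -!sum1dep_card (big_mkcond (fun i => 0 < ext0 _ _ i)) big_ord_recl ext0_0.
by rewrite ltr0N1 /= add0n [RHS]big_mkcond; apply: eq_bigr => j _; rewrite ext0_lift.
Qed.

Lemma card_ext0_neg (R : numDomainType) m (l : 'I_m -> R) :
  #|[set i : 'I_m.+1 | ext0 (-1) l i < 0]| = #|[set j | l j < 0]|.+1.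
Proof.
rewrite -!sum1dep_card (big_mkcond (fun i => ext0 _ _ i < 0)) big_ord_recl ext0_0.
rewrite ltrN10 /= add1n [in RHS]big_mkcond; congr _.+1.
by apply: eq_bigr => j _; rewrite ext0_lift.
Qed.

Section BarycentricFactorization.
Variable R : comNzRingType.

Definition points_mx n m (y : 'I_m -> 'cV[R]_n) : 'M[R]_(n, m) := \matrix_(a, i) y i a 0.

Definition bary_mx m (l : 'I_m -> R) : 'M[R]_m :=
  \matrix_(i, j) (l i *+ (i == j) - l i * l j).

Lemma bary_mx_tr m (l : 'I_m -> R) : (bary_mx l)^T = bary_mx l.
Proof.
by apply/matrixP => i j; rewrite !mxE eq_sym [l j * _]mulrC; case: eqP => [->|].
Qed.

Lemma mul_bary_mx m (l : 'I_m -> R) (z : 'rV_m) k :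
  (z *m bary_mx l) 0 k = z 0 k * l k - (\sum_j z 0 j * l j) * l k.
Proof.
rewrite !mxE; under eq_bigr do rewrite !mxE mulrBr mulrnAr.
by rewrite sumrB sum_mulrn_eq mulr_suml; under [X in _ - X]eq_bigr do rewrite mulrA.
Qed.

Lemma mul_const1_bary_mx m (l : 'I_m -> R) :
  \sum_i l i = 1 -> (const_mx 1 : 'rV_m) *m bary_mx l = 0.
Proof.
move=> l_sum; apply/rowP => k; rewrite mul_bary_mx !mxE.
by under eq_bigr do rewrite mxE mul1r; rewrite l_sum mul1r subrr.
Qed.

Lemma mul_bary_mx_const1 m (l : 'I_m -> R) :
  \sum_i l i = 1 -> bary_mx l *m (const_mx 1 : 'cV_m) = 0.
Proof.
move=> l_sum; apply: trmx_inj.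
by rewrite trmx_mul bary_mx_tr trmx_const mul_const1_bary_mx ?trmx0.
Qed.

Lemma Gmat_factor n y0 (y : 'I_n.+1 -> 'cV[R]_n) l :
  \sum_i l i *: y i = y0 ->
  Gmat y0 y l = points_mx y *m bary_mx l *m (points_mx y)^T.
Proof.
move=> l_y0; apply/matrixP => a b.
rewrite /Gmat summxE big_ord_recl !ext0_0.
under eq_bigr do rewrite !ext0_lift.
rewrite -l_y0 !mxE big_ord1 !mxE; under eq_bigr do rewrite !mxE big_ord1 !mxE.
have YM_a j : (points_mx y *m bary_mx l) a j =
    y j a 0 * l j - (\sum_i y i a 0 * l i) * l j.
  have := mul_bary_mx l (row a (points_mx y)) j.
  by rewrite -row_mul mxE => ->; rewrite !mxE; under eq_bigr do rewrite !mxE.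
under [RHS]eq_bigr do rewrite YM_a !mxE mulrBl.
rewrite sumrB addrC mulN1r !summxE; congr (_ - _); first by apply: eq_bigr => j _; ring.
under [RHS]eq_bigr do rewrite -mulrA; rewrite -mulr_sumr.
by congr (_ * _); apply: eq_bigr => i _; rewrite mxE // mulrC.
Qed.

End BarycentricFactorization.

Lemma map_bary_mx (R S : comNzRingType) (f : {rmorphism R -> S}) m (l : 'I_m -> R) :
  map_mx f (bary_mx l) = bary_mx (fun j => f (l j)).
Proof. by apply/matrixP => i j; rewrite !mxE rmorphB rmorphMn rmorphM. Qed.

Lemma affinely_independent_unitmx (R : fieldType) n (y : 'I_n.+1 -> 'cV[R]_n) :
  affinely_independent y -> col_mx (const_mx 1 : 'rV_n.+1) (points_mx y) \in unitmx.
Proof.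
move=> y_indep; rewrite -unitmx_tr -row_free_unit; apply/inj_row_free => w.
rewrite tr_col_mx mul_mx_row => /eqP; rewrite row_mx_eq0 => /andP[/eqP w1 /eqP wY].
have sum_w : \sum_i w 0 i = 0.
  have /rowP/(_ 0) := w1; rewrite !mxE => e; rewrite -[in RHS]e.
  by apply: eq_bigr => i _; rewrite !mxE mulr1.
have sum_wy : \sum_i w 0 i *: y i = 0.
  apply/matrixP => a b; rewrite ord1 summxE !mxE.
  have /rowP/(_ a) := wY; rewrite !mxE => e; rewrite -[in RHS]e.
  by apply: eq_bigr => i _; rewrite !mxE.
by apply/rowP => i; rewrite (y_indep _ sum_w sum_wy) mxE.
Qed.

Local Open Scope sesquilinear_scope.

Definition coord_mx (K : pzRingType) m (S : {set 'I_m}) : 'M[K]_(#|S|, m) :=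
  \matrix_(i, j) ((enum_val i == j)%:R).

Lemma coord_mx_enum_val (K : pzRingType) m (S : {set 'I_m}) (c : 'rV[K]_#|S|) i :
  (c *m coord_mx K S) 0 (enum_val i) = c 0 i.
Proof.
rewrite !mxE (bigD1 i) //= mxE eqxx mulr1 big1 ?addr0 // => k ki.
by rewrite mxE (inj_eq enum_val_inj) (negbTE ki) mulr0.
Qed.

Lemma coord_mx_notin (K : pzRingType) m (S : {set 'I_m}) (c : 'rV[K]_#|S|) j :
  j \notin S -> (c *m coord_mx K S) 0 j = 0.
Proof.
move=> jS; rewrite !mxE big1 // => k _; rewrite mxE.
by case: eqP => [ej|]; [move: jS; rewrite -ej enum_valP | rewrite mulr0].
Qed.

Lemma row_free_coord_mx (F : fieldType) m (S : {set 'I_m}) : row_free (coord_mx F S).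
Proof.
by apply/inj_row_free => c c0; apply/rowP => i; rewrite -coord_mx_enum_val c0 !mxE.
Qed.

Section Sylvester.
Variable C : numClosedFieldType.

Definition qform n (A : 'M[C]_n) (u : 'rV[C]_n) : C := (u *m A *m u^t*) 0 0.

Lemma qform0 n (A : 'M[C]_n) : qform A 0 = 0.
Proof. by rewrite /qform !mul0mx mxE. Qed.

Lemma qform_diag n (d : 'rV[C]_n) x :
  qform (diag_mx d) x = \sum_j d 0 j * (x 0 j * (x 0 j)^*).
Proof.
rewrite /qform mul_mx_diag !mxE; apply: eq_bigr => j _.
by rewrite !mxE mulrCA mulrA.
Qed.

Lemma qform_unitary_conj n (P A : 'M[C]_n) v :
  P \is unitarymx -> qform (P^t* *m A *m P) (v *m P) = qform A v.
Proof. by move=> Pu; rewrite /qform !trmx_mul !map_mxM !mulmxA !(mulmxtVK _ Pu). Qed.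

(* V meets the row space of [coord_mx S *m P] trivially, so their dimensions add up
   to at most n. *)
Lemma sylvester_bound n (P : 'M[C]_n) (d : 'rV[C]_n) (S : {set 'I_n}) (Q : pred C)
    r (V : 'M[C]_(r, n)) :
  P \is unitarymx ->
  (forall x : 'rV_n, x != 0 -> (forall j, j \notin S -> x 0 j = 0) ->
     Q (qform (diag_mx d) x)) ->
  (forall c : 'rV_r, c != 0 ->
     (c *m V != 0) && ~~ Q (qform (P^t* *m diag_mx d *m P) (c *m V))) ->
  (r + #|S| <= n)%N.
Proof.
move=> Pu QS notQV; pose W := coord_mx C S *m P.
have rankV : \rank V = r.
  apply/eqP; rewrite -[_ == _]/(row_free V); apply/inj_row_free => c cV.
  by apply/eqP/contraT => /notQV; rewrite cV eqxx.
have rankW : \rank W = #|S|.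
  by rewrite mxrankMfree ?row_free_unit ?unitarymx_unit //; apply/eqP/row_free_coord_mx.
have capVW : (V :&: W = 0)%MS.
  apply/eqP; rewrite -submx0; apply/row_subP => i.
  have /[!sub_capmx] /andP[/submxP[c ->] /submxP[c' cVW]] := row_sub i (V :&: W)%MS.
  rewrite submx0; apply: contraT => cV0.
  have /notQV/andP[_] : c != 0 by apply: contraNneq cV0 => ->; rewrite mul0mx.
  rewrite cVW mulmxA qform_unitary_conj // QS //; last exact: coord_mx_notin.
  by apply: contraNneq cV0; rewrite cVW mulmxA => ->; rewrite mul0mx.
have := mxrank_sum_cap V W; rewrite capVW mxrank0 addn0 rankV rankW => <-.
exact: rank_leq_col.
Qed.

Section Inertia.
Variables (n : nat) (P : 'M[C]_n) (d : 'rV[C]_n).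
Hypotheses (Pu : P \is unitarymx) (d_real : forall j, d 0 j \is Num.real).
Let A := P^t* *m diag_mx d *m P.

Lemma pos_dim_le r (V : 'M_(r, n)) :
  (forall c : 'rV_r, c != 0 -> 0 < qform A (c *m V)) ->
  (r <= #|[set j | (0 < d 0 j)%R]|)%N.
Proof.
move=> Vpos; set S := [set j | 0 < d 0 j].
rewrite -(leq_add2r #|~: S|) cardsC card_ord.
apply: (sylvester_bound (d := d) (V := V) (Q := fun x => x <= 0)) Pu _ _ => [x _ xS|c c0].
  rewrite qform_diag sumr_le0 // => j _; case: (boolP (j \in S)) => jS.
    by rewrite xS ?in_setC ?negbK // conjC0 !mulr0.
  by move: jS; rewrite inE => jS; rewrite mulr_le0_ge0 ?mul_conjC_ge0 // real_leNgt ?real0.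
have qV := Vpos c c0; rewrite -/A (lt_geF qV) andbT.
by apply: contraTneq qV => ->; rewrite qform0 ltxx.
Qed.

Lemma neg_dim_le r (V : 'M_(r, n)) :
  (forall c : 'rV_r, c != 0 -> qform A (c *m V) < 0) ->
  (r <= #|[set j | (d 0 j < 0)%R]|)%N.
Proof.
move=> Vneg; set S := [set j | d 0 j < 0].
rewrite -(leq_add2r #|~: S|) cardsC card_ord.
apply: (sylvester_bound (d := d) (V := V) (Q := fun x => 0 <= x)) Pu _ _ => [x _ xS|c c0].
  rewrite qform_diag sumr_ge0 // => j _; case: (boolP (j \in S)) => jS.
    by rewrite xS ?in_setC ?negbK // conjC0 !mulr0.
  by move: jS; rewrite inE => jS; rewrite mulr_ge0 ?mul_conjC_ge0 // real_leNgt ?real0.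
have qV := Vneg c c0; rewrite -/A (lt_geF qV) andbT.
by apply: contraTneq qV => ->; rewrite qform0 ltxx.
Qed.

(* A vector killed by A is isotropic for A *m A, whose form is definite off the
   kernel coordinates. *)
Lemma ker_dim_le r (V : 'M_(r, n)) :
  (forall c : 'rV_r, c != 0 -> (c *m V != 0) && (c *m V *m A == 0)) ->
  (r <= #|[set j | (d 0 j == 0)%R]|)%N.
Proof.
move=> Vker; set S := [set j | d 0 j == 0].
have sqr_d j : d 0 j * d 0 j = d 0 j * (d 0 j)^* by rewrite conj_Creal.
pose d2 := \row_j (d 0 j * d 0 j).
have AA : A *m A = P^t* *m diag_mx d2 *m P.
  by rewrite /A !mulmxA (mulmxtVK _ Pu) -[_ *m diag_mx d *m diag_mx d]mulmxA mulmx_diag.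
rewrite -(leq_add2r #|~: S|) cardsC card_ord.
apply: (sylvester_bound (d := d2) (V := V) (Q := fun x => 0 < x)) Pu _ _ => [x x0 xS|c c0].
  have [j0 xj0] := rV0Pn _ x0.
  have dj0 : d 0 j0 != 0.
    by apply: contraNneq xj0 => dj0; rewrite xS // in_setC negbK inE dj0.
  rewrite qform_diag (bigD1 j0) //= ltr_pwDl ?sumr_ge0 // => [|j _].
    by rewrite mulr_gt0 ?mul_conjC_gt0 // mxE sqr_d mul_conjC_gt0.
  by rewrite mulr_ge0 ?mul_conjC_ge0 // mxE sqr_d mul_conjC_ge0.
have /andP[-> /eqP AV] := Vker c c0; rewrite -AA /qform mulmxA AV.
by rewrite !mul0mx mxE ltxx.
Qed.

Lemma inertia_of_families p q k :
  (p + q + k = n)%N ->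
  (exists V : 'M_(p, n), forall c : 'rV_p, c != 0 -> 0 < qform A (c *m V)) ->
  (exists V : 'M_(q, n), forall c : 'rV_q, c != 0 -> qform A (c *m V) < 0) ->
  (exists V : 'M_(k, n), forall c : 'rV_k, c != 0 ->
     (c *m V != 0) && (c *m V *m A == 0)) ->
  #|[set j | (0 < d 0 j)%R]| = p /\ #|[set j | (d 0 j < 0)%R]| = q.
Proof.
move=> pqk [Vp /pos_dim_le hp] [Vq /neg_dim_le hq] [Vk /ker_dim_le hk].
move: hp hq hk (card_sign_partition d_real).
set pos := #|_|; set neg := #|_|; set zero := #|_|; lia.
Qed.

End Inertia.
End Sylvester.

Lemma char_poly_similar (F : fieldType) n (P A : 'M[F]_n) :
  P \in unitmx -> char_poly (invmx P *m A *m P) = char_poly A.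
Proof.
move=> Pu.
have XP : ('X%:M : 'M[{poly F}]_n) = map_mx polyC (invmx P) *m 'X%:M *m map_mx polyC P.
  by rewrite mul_mx_scalar -scalemxAl -map_mxM mulVmx // map_mx1 scalemx1.
rewrite /char_poly /char_poly_mx {1}XP !map_mxM -mulmxBl -mulmxBr !det_mulmx.
by rewrite mulrC mulrA -det_mulmx -map_mxM mulmxV // map_mx1 det1 mul1r.
Qed.

(* The spectral theorem is available for hermitian matrices over a numClosedFieldType,
   hence the passage to R[i]. *)
Lemma symmetric_inertia (R : rcfType) n (A : 'M[R]_n) p q k :
  A^T = A -> (p + q + k = n)%N ->
  (exists V : 'M_(p, n), forall c : 'rV_p, c != 0 ->
     0 < qform (map_mx (real_complex R) A) (c *m V)) ->
  (exists V : 'M_(q, n), forall c : 'rV_q, c != 0 ->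
     qform (map_mx (real_complex R) A) (c *m V) < 0) ->
  (exists V : 'M_(k, n), forall c : 'rV_k, c != 0 ->
     (c *m V != 0) && (c *m V *m map_mx (real_complex R) A == 0)) ->
  exists s : seq R, eigen_multiset A s /\
    count (fun x => 0 < x) s = p /\ count (fun x => x < 0) s = q.
Proof.
move=> symA pqk; set AC := map_mx _ A => pos neg ker.
have AC_herm : AC \is hermsymmx.
  apply: realsym_hermsym; last by apply/mxOverP => i j; rewrite mxE complex_real.
  have AC_sym : AC^T = AC by rewrite /AC map_trmx symA.
  apply/is_hermitianmxP; rewrite expr0 scale1r; apply/matrixP => i j.
  by rewrite -[in LHS]AC_sym !mxE.
pose P := spectralmx AC; pose d := spectral_diag AC.
have Pu : P \is unitarymx := spectral_unitarymx AC.
have AC_spectral : AC = P^t* *m diag_mx d *m P.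
  by rewrite -invmx_unitary //; apply/orthomx_spectralP/hermitian_normalmx.
have d_real j : d 0 j \is Num.real.
  by move/mxOverP: (hermitian_spectral_diag_real AC_herm) => /(_ 0 j).
rewrite AC_spectral in pos neg ker.
have [dpos dneg] := inertia_of_families Pu d_real pqk pos neg ker.
exists [seq complex.Re (d 0 j) | j <- enum 'I_n]; split; last first.
  rewrite !count_map -dpos -dneg !card_set_count enumT.
  by split; apply: eq_count => j /=; rewrite -ltcR RRe_real.
apply: (map_poly_inj (real_complex R)); rewrite map_char_poly -/AC AC_spectral.
rewrite -invmx_unitary // char_poly_similar ?unitarymx_unit //.
rewrite char_poly_trig ?diag_mx_is_trig // rmorph_prod big_map enumT.
apply: eq_bigr => j _.
by rewrite mxE eqxx mulr1n rmorphB /= map_polyX map_polyC /= RRe_real.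
Qed.

Lemma sum_weighted_sqr_gt0 (C : numClosedFieldType) m (g : 'I_m -> C) (w : 'rV[C]_m) j0 :
  (forall j, w 0 j != 0 -> 0 < g j) -> w 0 j0 != 0 ->
  0 < \sum_j g j * (w 0 j * (w 0 j)^*).
Proof.
move=> g_pos wj0; rewrite (bigD1 j0) //= ltr_pwDl ?sumr_ge0 // => [|j _].
  by rewrite mulr_gt0 ?g_pos ?mul_conjC_gt0.
have [->|wj] := eqVneq (w 0 j) 0; first by rewrite mul0r mulr0.
by rewrite mulr_ge0 ?mul_conjC_ge0 // ltW ?g_pos.
Qed.

Section BarycentricForm.
Variables (C : numClosedFieldType) (n : nat) (Y : 'M[C]_(n, n.+1)) (l : 'I_n.+1 -> C).
Hypotheses (Y_real : Y \is a realmx) (l_real : forall j, l j \is Num.real).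
Hypotheses (Y_unit : col_mx (const_mx 1 : 'rV_n.+1) Y \in unitmx) (l_sum : \sum_j l j = 1).

Let M := bary_mx l.
Let G := Y *m M *m Y^T.
Let Yi : 'M_(n.+1, 1 + n) := invmx (col_mx (const_mx 1 : 'rV_n.+1) Y).
(* z = t 1 + x Y with t := z *m lsubmx Yi and x := z *m X. *)
Let X := rsubmx Yi.

Lemma mul_lift_points (z : 'rV_n.+1) : z *m X *m Y = z - z *m lsubmx Yi *m const_mx 1.
Proof.
have zE : z = z *m lsubmx Yi *m const_mx 1 + z *m X *m Y.
  by rewrite -!mulmxA -mulmxDr -mul_row_col hsubmxK mulVmx ?mulmx1.
by rewrite {2}zE addrC addKr.
Qed.

Lemma qform_lift (z : 'rV_n.+1) : qform G (z *m X) = qform M z.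
Proof.
set t := z *m lsubmx Yi.
have adjY (u : 'rV_n) : (u *m Y)^t* = Y^T *m u^t*.
  by rewrite trmx_mul map_mxM -map_trmx (realmxC Y_real).
have adj1 : (t *m (const_mx 1 : 'rV_n.+1))^t* = const_mx 1 *m t^t*.
  by rewrite trmx_mul map_mxM trmx_const map_const_mx rmorph1.
rewrite /qform /G !mulmxA -[_ *m Y^T *m _]mulmxA -adjY mul_lift_points.
rewrite mulmxBl -[t *m _ *m M]mulmxA mul_const1_bary_mx // mulmx0 subr0.
have M1 : M *m (const_mx 1 *m t^t*) = 0 by rewrite mulmxA mul_bary_mx_const1 // mul0mx.
by rewrite linearB /= map_mxB adj1 mulmxBr -[z *m M *m (_ *m _)]mulmxA M1 mulmx0 subr0.
Qed.

Lemma qform_bary_mx (z : 'rV_n.+1) :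
  qform M z = \sum_j l j * (z 0 j * (z 0 j)^*)
              - (\sum_j l j * z 0 j) * (\sum_j l j * z 0 j)^*.
Proof.
rewrite /qform mxE; under eq_bigr do rewrite mul_bary_mx !mxE mulrBl.
rewrite sumrB; congr (_ - _); first by apply: eq_bigr => j _; rewrite mulrAC mulrC.
under eq_bigr do rewrite -mulrA; rewrite -mulr_sumr rmorph_sum; congr (_ * _).
  by apply: eq_bigr => j _; rewrite mulrC.
by apply: eq_bigr => j _; rewrite rmorphM /= (conj_Creal (l_real j)).
Qed.

Lemma exists_pos_weight : exists a0, 0 < l a0.
Proof.
apply/existsP; apply: contraT => /existsPn l_le0.
have : \sum_j l j <= 0 by apply: sumr_le0 => j _; rewrite real_leNgt ?real0.
by rewrite l_sum ler10.
Qed.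

(* c is sent to l_a0 (c E) - (sum_k l_k (c E)_k) e_a0, a vector supported on
   {l > 0} and orthogonal to l, on which the form of M is sum_j l_j |z_j|^2. *)
Lemma pos_family a0 : 0 < l a0 ->
  exists V : 'M_(#|[set j | 0 < l j] :\ a0|, n),
    forall c : 'rV_#|[set j | 0 < l j] :\ a0|, c != 0 -> 0 < qform G (c *m V).
Proof.
move=> la0; set B := _ :\ a0; pose E := coord_mx C B.
pose Z := l a0 *: E - E *m (\col_j l j) *m (\row_j (a0 == j)%:R).
exists (Z *m X) => c c0; rewrite mulmxA qform_lift qform_bary_mx.
have wE j : (c *m Z) 0 j =
    l a0 * (c *m E) 0 j - (\sum_k (c *m E) 0 k * l k) * (a0 == j)%:R.
  rewrite mulmxBr -scalemxAr !mulmxA !mxE big_ord1 !mxE; congr (_ - _ * _).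
  by apply: eq_bigr => k _; rewrite !mxE.
have -> : \sum_j l j * (c *m Z) 0 j = 0.
  under eq_bigr do rewrite wE mulrBr mulr_natr mulrnAr eq_sym.
  rewrite sumrB sum_mulrn_eq mulr_sumr; apply/eqP; rewrite subr_eq0; apply/eqP.
  by apply: eq_bigr => j _; rewrite mulrCA [l j * _]mulrC.
rewrite conjC0 mulr0 subr0; have [i ci] := rV0Pn _ c0.
have /setD1P[ia0 _] : enum_val i \in B by apply: enum_valP.
apply: (@sum_weighted_sqr_gt0 _ _ _ _ (enum_val i)) => [j|].
  have [<- //|ja0] := eqVneq a0 j.
  rewrite wE (negbTE ja0) mulr0 subr0 mulf_eq0 negb_or => /andP[_].
  by apply: contraNT => /negbTE jpos; rewrite coord_mx_notin // !inE jpos andbF.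
rewrite wE [a0 == _]eq_sym (negbTE ia0) mulr0 subr0 coord_mx_enum_val.
by rewrite mulf_neq0 // gt_eqF.
Qed.

Lemma neg_family :
  exists V : 'M_(#|[set j | l j < 0]|, n),
    forall c : 'rV_#|[set j | l j < 0]|, c != 0 -> qform G (c *m V) < 0.
Proof.
set B := [set j | l j < 0]; exists (coord_mx C B *m X) => c c0.
rewrite mulmxA qform_lift qform_bary_mx; set z := c *m _.
have [i ci] := rV0Pn _ c0.
have : 0 < \sum_j - l j * (z 0 j * (z 0 j)^*).
  apply: (@sum_weighted_sqr_gt0 _ _ _ _ (enum_val i)); last by rewrite coord_mx_enum_val.
  move=> j; apply: contraNT; rewrite oppr_gt0 => jB.
  by rewrite coord_mx_notin // inE.
under eq_bigr do rewrite mulNr; rewrite sumrN oppr_gt0 => neg_sum.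
by apply: le_lt_trans neg_sum; rewrite lerBlDr lerDl mul_conjC_ge0.
Qed.

Lemma ker_family a0 : 0 < l a0 ->
  exists V : 'M_(#|[set j | l j == 0]|, n),
    forall c : 'rV_#|[set j | l j == 0]|, c != 0 ->
      (c *m V != 0) && (c *m V *m G == 0).
Proof.
move=> la0; set B := [set j | l j == 0]; exists (coord_mx C B *m X) => c c0.
rewrite mulmxA; set z := c *m coord_mx C B.
have zl j : z 0 j * l j = 0.
  have [jB|jB] := boolP (j \in B); last by rewrite coord_mx_notin // mul0r.
  by move: jB; rewrite inE => /eqP ->; rewrite mulr0.
have zM : z *m M = 0.
  by apply/rowP => k; rewrite mul_bary_mx zl big1 ?mul0r ?subrr ?mxE.
apply/andP; split.
  apply: contraNneq c0 => zX0; apply/eqP/rowP => i.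
  have := mul_lift_points z; rewrite zX0 mul0mx => /eqP.
  rewrite eq_sym subr_eq0 => /eqP zc.
  have zconst j : z 0 j = (z *m lsubmx Yi) 0 0.
    by rewrite {1}zc !mxE big_ord1 !mxE mulr1.
  by rewrite mxE -coord_mx_enum_val -/z zconst -(zconst a0) coord_mx_notin // inE gt_eqF.
by rewrite /G !mulmxA mul_lift_points mulmxBl zM -[_ *m const_mx 1 *m M]mulmxA
  mul_const1_bary_mx // mulmx0 subrr mul0mx.
Qed.

Lemma bary_dims a0 : 0 < l a0 ->
  (#|[set j | (0 < l j)%R] :\ a0| + #|[set j | (l j < 0)%R]| + #|[set j | (l j == 0)%R]|
    = n)%N.
Proof.
move=> la0; have := card_sign_partition l_real.
by rewrite (cardsD1 a0) inE la0 add1n -!addnA addSn => -[]; rewrite !addnA.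
Qed.

End BarycentricForm.

Lemma bary_form_inertia (R : rcfType) n (Y : 'M[R]_(n, n.+1)) (l : 'I_n.+1 -> R) :
  col_mx (const_mx 1 : 'rV_n.+1) Y \in unitmx -> \sum_j l j = 1 ->
  exists s : seq R, eigen_multiset (Y *m bary_mx l *m Y^T) s /\
    count (fun x => 0 < x) s = #|[set j | 0 < l j]|.-1 /\
    count (fun x => x < 0) s = #|[set j | l j < 0]|.
Proof.
move=> Y_unit l_sum; pose f := real_complex R.
pose YC := map_mx f Y; pose lC j := f (l j).
have YC_real : YC \is a realmx by apply/mxOverP => i j; rewrite mxE complex_real.
have lC_real j : lC j \is Num.real by rewrite complex_real.
have YC_unit : col_mx (const_mx 1 : 'rV_n.+1) YC \in unitmx.
  by rewrite -(rmorph1 f) -map_const_mx -map_col_mx map_unitmx.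
have lC_sum : \sum_j lC j = 1 by rewrite -rmorph_sum l_sum rmorph1.
have G_sym : (Y *m bary_mx l *m Y^T)^T = Y *m bary_mx l *m Y^T.
  by rewrite !trmx_mul trmxK bary_mx_tr mulmxA.
have GC : map_mx f (Y *m bary_mx l *m Y^T) = YC *m bary_mx lC *m YC^T.
  by rewrite !map_mxM map_trmx map_bary_mx.
have [a0 la0] := exists_pos_weight lC_real lC_sum.
have pos := pos_family YC_real lC_real YC_unit lC_sum la0.
have neg := neg_family YC_real lC_real YC_unit lC_sum.
have ker := ker_family YC_unit lC_sum la0.
rewrite -GC in pos neg ker.
have [s [Es [ps ns]]] := symmetric_inertia G_sym (bary_dims lC_real la0) pos neg ker.
have posC : [set j | 0 < lC j] = [set j | 0 < l j] by apply/setP => j; rewrite !inE ltcR.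
have negC : [set j | lC j < 0] = [set j | l j < 0] by apply/setP => j; rewrite !inE ltcR.
exists s; rewrite ps ns -posC -negC (cardsD1 a0 [set j | 0 < lC j]).
by rewrite inE la0.
Qed.

Theorem lemma4p1 (R : rcfType) (n : nat) (y : 'I_n.+1 -> 'cV[R]_n) (y0 : 'cV[R]_n)
  (l : 'I_n.+1 -> R) :
  affinely_independent y ->
  barycentric y y0 l ->
  exists s : seq R,
    eigen_multiset (Gmat y0 y l) s /\
    count (fun x => 0 < x) s = #|[set i : 'I_n.+2 | 0 < ext0 (-1) l i]|.-1 /\
    count (fun x => x < 0) s = #|[set i : 'I_n.+2 | ext0 (-1) l i < 0]|.-1.
Proof.
move=> /affinely_independent_unitmx Y_unit [l_sum /Gmat_factor ->].
by rewrite card_ext0_pos card_ext0_neg; apply: bary_form_inertia.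
Qed.
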